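(* Let $\mathcal A\in\mathbb Q^{n\times n\times n_3}$ with $\operatorname{Ind}_{QT}(\mathcal A)=k$, and let $\mathcal A^D\in\mathbb Q^{n\times n\times n_3}$ be its QT-Drazin inverse. Then $\mathtt{bcirc_z}(\mathcal A)^D=\mathtt{bcirc_z}(\mathcal A^D)$, where the left-hand side is the Drazin inverse of the quaternion matrix $\mathtt{bcirc_z}(\mathcal A)$.
   Context: $\mathbb Q$ denotes the real quaternions with the usual Hamilton multiplication; $\mathbb C$ is identified with $\{a_0+a_1\mathbf i\}$. Every quaternion array $A=A_0+A_1\mathbf i+A_2\mathbf j+A_3\mathbf k$ (real $A_t$) is written uniquely as $A=A_{\mathbf d}+\mathbf jA_{\mathbf c}$ with $A_{\mathbf d}=A_0+A_1\mathbf i$, $A_{\mathbf c}=A_2-A_3\mathbf i$. For $\mathcal A\in\mathbb Q^{n_1\times n_2\times n_3}$, $\mathcal A^{(s)}=\mathcal A(:,:,s)$. For a complex tensor $\mathcal C$, $\mathtt{bcirc}(\mathcal C)$ is the block circulant matrix with $(p,q)$ block $\mathcal C^{(((p-q)\bmod n_3)+1)}$. $P_{n_3}$ is the permutation matrix with first row $e_1^T$ and $r$-th row $e_{n_3+2-r}^T$ ($r\ge2$). $\mathtt{bcirc_z}(\mathcal A)=\mathtt{bcirc}(\mathcal A_{\mathbf d})+\mathbf j\,\mathtt{bcirc}(\mathcal A_{\mathbf c})(P_{n_3}\otimes I_{n_2})$. $\mathtt{unfold}(\mathcal B)=[\mathcal B^{(1)};\dots;\mathcal B^{(n_3)}]$,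 $\mathtt{fold}$ its inverse; QT-product $\mathcal A*_Q\mathcal B=\mathtt{fold}(\mathtt{bcirc_z}(\mathcal A)\mathtt{unfold}(\mathcal B))$; identity tensor $\mathcal I$: first frontal slice $I_n$, others zero; $\mathcal A^0=\mathcal I$, $\mathcal A^{k+1}=\mathcal A*_Q\mathcal A^k$. Conjugate transpose of a tensor: for complex $\mathcal C$, $\mathcal C^*$ has frontal slices $(\mathcal C^{(1)})^*$ and $(\mathcal C^{(n_3+2-s)})^*$ ($s\ge2$); $\mathcal A^*$ is defined by $\mathtt{unfold}(\mathcal A^* )=\mathtt{unfold}(\mathcal A_{\mathbf d}^* )-(P_{n_3}\otimes I_{n_2})\mathtt{unfold}(\mathcal A_{\mathbf c}^* )\mathbf j$; $\mathcal U$ is unitary if $\mathcal U^**_Q\mathcal U=\mathcal U*_Q\mathcal U^*=\mathcal I$. QT-rank: given a QT-SVD $\mathcal A=\mathcal U*_Q\mathcal S*_Q\mathcal V^*$ ($\mathcal U,\mathcal V$ unitary, every frontal slice of $\mathcal S$ diagonal), $\operatorname{rank}_{QT}(\mathcal A)=\#\{i\le\min(n_1,n_2):\|\mathcal S(i,i,:)\|_F>0\}$. QT-index $\operatorname{Ind}_{QT}(\mathcal A)$: least integer $k\ge0$ with $\operatorname{rank}_{QT}(\mathcal A^{k+1})=\operatorname{rank}_{QT}(\mathcal A^k)$. QT-Drazin inverse of $\mathcal A$ with $\operatorname{Ind}_{QT}(\mathcal A)=k$: a tensor $\mathcal X=\mathcal A^D$ with $\mathcal A^k*_Q\mathcal X*_Q\mathcal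 A=\mathcal A^k$, $\mathcal X*_Q\mathcal A*_Q\mathcal X=\mathcal X$, $\mathcal A*_Q\mathcal X=\mathcal X*_Q\mathcal A$. For a square quaternion matrix $M$, $\operatorname{Ind}(M)$ is the least $m\ge0$ with $\operatorname{rank}(M^{m+1})=\operatorname{rank}(M^m)$, and its Drazin inverse $M^D$ is the unique $X$ with $M^mXM=M^m$ ($m=\operatorname{Ind}(M)$), $XMX=X$, $MX=XM$. *)

From HB Require Import structures.
From mathcomp Require Import all_boot all_order all_algebra.
From mathcomp Require Import boolp reals.
From mathcomp Require Import ring.
From Stdlib Require Import ClassicalEpsilon.
Set Implicit Arguments. Unset Strict Implicit. Unset Printing Implicit Defensive.
Import Order.TTheory GRing.Theory Num.Theory.
Local Open Scope ring_scope.

Section Quaternion.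
Variable R : realType.

Record quat := Quat { q0 : R; q1 : R; q2 : R; q3 : R }.

Definition quat2tup (x : quat) := (q0 x, q1 x, q2 x, q3 x).
Definition tup2quat (t : R * R * R * R) := let: (a, b, c, d) := t in Quat a b c d.
Lemma quat2tupK : cancel quat2tup tup2quat. Proof. by case. Qed.
HB.instance Definition _ := Choice.copy quat (can_type quat2tupK).

Definition qzero := Quat 0 0 0 0.
Definition qopp x := Quat (- q0 x) (- q1 x) (- q2 x) (- q3 x).
Definition qadd x y := Quat (q0 x + q0 y) (q1 x + q1 y) (q2 x + q2 y) (q3 x + q3 y).

Definition qone := Quat 1 0 0 0.
(* Hamilton product: i^2 = j^2 = k^2 = ijk = -1 *)
Definition qmul x y := Quat
  (q0 x * q0 y - q1 x * q1 y - q2 x * q2 y - q3 x * q3 y)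
  (q0 x * q1 y + q1 x * q0 y + q2 x * q3 y - q3 x * q2 y)
  (q0 x * q2 y - q1 x * q3 y + q2 x * q0 y + q3 x * q1 y)
  (q0 x * q3 y + q1 x * q2 y - q2 x * q1 y + q3 x * q0 y).

Lemma qaddA : associative qadd.
Proof. by case=> ? ? ? ?; case=> ? ? ? ?; case=> ? ? ? ?; cbv [qadd qopp qzero qmul qone q0 q1 q2 q3]; congr Quat; ring. Qed.
Lemma qaddC : commutative qadd.
Proof. by case=> ? ? ? ?; case=> ? ? ? ?; cbv [qadd qopp qzero qmul qone q0 q1 q2 q3]; congr Quat; ring. Qed.
Lemma qadd0 : left_id qzero qadd.
Proof. by case=> ? ? ? ?; cbv [qadd qopp qzero qmul qone q0 q1 q2 q3]; congr Quat; ring. Qed.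
Lemma qaddN : left_inverse qzero qopp qadd.
Proof. by case=> ? ? ? ?; cbv [qadd qopp qzero qmul qone q0 q1 q2 q3]; congr Quat; ring. Qed.
HB.instance Definition _ := GRing.isZmodule.Build quat qaddA qaddC qadd0 qaddN.

Lemma qmulA : associative qmul.
Proof. by case=> ? ? ? ?; case=> ? ? ? ?; case=> ? ? ? ?; cbv [qadd qopp qzero qmul qone q0 q1 q2 q3]; congr Quat; ring. Qed.
Lemma qmul1 : left_id qone qmul.
Proof. by case=> ? ? ? ?; cbv [qadd qopp qzero qmul qone q0 q1 q2 q3]; congr Quat; ring. Qed.
Lemma qmulr1 : right_id qone qmul.
Proof. by case=> ? ? ? ?; cbv [qadd qopp qzero qmul qone q0 q1 q2 q3]; congr Quat; ring. Qed.
Lemma qmulDl : left_distributive qmul qadd.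
Proof. by case=> ? ? ? ?; case=> ? ? ? ?; case=> ? ? ? ?; cbv [qadd qopp qzero qmul qone q0 q1 q2 q3]; congr Quat; ring. Qed.
Lemma qmulDr : right_distributive qmul qadd.
Proof. by case=> ? ? ? ?; case=> ? ? ? ?; case=> ? ? ? ?; cbv [qadd qopp qzero qmul qone q0 q1 q2 q3]; congr Quat; ring. Qed.
Lemma qone_neq0 : qone != qzero.
Proof. by apply/eqP => -[] /eqP; rewrite oner_eq0. Qed.
HB.instance Definition _ :=
  GRing.Zmodule_isNzRing.Build quat qmulA qmul1 qmulr1 qmulDl qmulDr qone_neq0.

Definition qi : quat := Quat 0 1 0 0.
Definition qj : quat := Quat 0 0 1 0.
Definition qk : quat := Quat 0 0 0 1.
Definition qconj (x : quat) : quat := Quat (q0 x) (- q1 x) (- q2 x) (- q3 x).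
Definition qnorm2 (x : quat) : R := q0 x ^+ 2 + q1 x ^+ 2 + q2 x ^+ 2 + q3 x ^+ 2.
(* A = A_d + j A_c, with A_d = A0 + A1 i and A_c = A2 - A3 i (complex numbers
   a0 + a1 i are identified with the quaternions a0 + a1 i + 0 j + 0 k). *)
Definition qd (x : quat) : quat := Quat (q0 x) (q1 x) 0 0.
Definition qc (x : quat) : quat := Quat (q2 x) (- q3 x) 0 0.

Definition mget m n (M : 'M[quat]_(m, n)) (i j : nat) : quat :=
  match (insub i : option 'I_m), (insub j : option 'I_n) with
  | Some i', Some j' => M i' j'
  | _, _ => 0
  end.

Definition mctr m n (M : 'M[quat]_(m, n)) : 'M[quat]_(n, m) := map_mx qconj M^T.

Fixpoint mxpow N (M : 'M[quat]_N) (k : nat) : 'M[quat]_N :=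
  if k is k'.+1 then M *m mxpow M k' else 1%:M.

Definition col_indep m n (M : 'M[quat]_(m, n)) (S : {set 'I_n}) : Prop :=
  forall c : 'cV[quat]_n,
    (forall j, j \notin S -> c j ord0 = 0) -> M *m c = 0 -> c = 0.

Definition qrank m n (M : 'M[quat]_(m, n)) : nat :=
  \max_(S : {set 'I_n} | `[< col_indep M S >]) #|S|.

Definition is_mxInd N (M : 'M[quat]_N) (m : nat) : Prop :=
  qrank (mxpow M m.+1) = qrank (mxpow M m) /\
  (forall j, (j < m)%N -> qrank (mxpow M j.+1) <> qrank (mxpow M j)).

Definition is_mxDrazin N (M X : 'M[quat]_N) : Prop :=
  exists m, is_mxInd M m /\
    [/\ mxpow M m *m X *m M = mxpow M m, X *m M *m X = X & M *m X = X *m M].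

(* (slice index s : 'I_n3 is the 0-based version of the paper's s).   *)
Definition tensor (n1 n2 n3 : nat) := {ffun 'I_n3 -> 'M[quat]_(n1, n2)}.

Definition tmap n1 n2 n3 (f : quat -> quat) (A : tensor n1 n2 n3) : tensor n1 n2 n3 :=
  [ffun s => map_mx f (A s)].

Definition sliceN n1 n2 n3 (A : tensor n1 n2 n3) (s : nat) : 'M[quat]_(n1, n2) :=
  match (insub s : option 'I_n3) with Some s' => A s' | None => 0 end.

(* bcirc: block (p,q) (0-based) is the slice of index (p - q) mod n3 *)
Definition bcirc n1 n2 n3 (C : tensor n1 n2 n3) : 'M[quat]_(n3 * n1, n3 * n2) :=
  \matrix_(r, c) mget (sliceN C ((r %/ n1 + n3 - c %/ n2) %% n3)%N) (r %% n1)%N (c %% n2)%N.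

(* P_{n3} (x) I_{n2}; row a (0-based) of P_{n3} is e_{(n3 - a) mod n3} (0-based) *)
Definition permkron (n3 n2 : nat) : 'M[quat]_(n3 * n2) :=
  \matrix_(r, c) (((c %/ n2)%N == ((n3 - r %/ n2) %% n3)%N) && ((r %% n2)%N == (c %% n2)%N))%:R.

Definition bcircz n1 n2 n3 (A : tensor n1 n2 n3) : 'M[quat]_(n3 * n1, n3 * n2) :=
  bcirc (tmap qd A) + map_mx (fun x => qj * x) (bcirc (tmap qc A) *m permkron n3 n2).

Definition unfold n1 n2 n3 (B : tensor n1 n2 n3) : 'M[quat]_(n3 * n1, n2) :=
  \matrix_(r, c) mget (sliceN B (r %/ n1)%N) (r %% n1)%N c.

Definition fold n1 n2 n3 (M : 'M[quat]_(n3 * n1, n2)) : tensor n1 n2 n3 :=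
  [ffun s : 'I_n3 => \matrix_(i, j) mget M (s * n1 + i)%N j].

Definition qtprod n1 n2 n4 n3 (A : tensor n1 n2 n3) (B : tensor n2 n4 n3) :
  tensor n1 n4 n3 := fold (bcircz A *m unfold B).

Definition tid n n3 : tensor n n n3 := [ffun s : 'I_n3 => if val s == 0%N then 1%:M else 0].

Fixpoint qtpow n n3 (A : tensor n n n3) (k : nat) : tensor n n n3 :=
  if k is k'.+1 then qtprod A (qtpow A k') else tid n n3.

(* conjugate transpose of a complex tensor: slices (C^(1))^*, (C^(n3+2-s))^* *)
Definition ctrC n1 n2 n3 (C : tensor n1 n2 n3) : tensor n2 n1 n3 :=
  [ffun s : 'I_n3 => mctr (sliceN C ((n3 - s) %% n3)%N)].

Definition ctrT n1 n2 n3 (A : tensor n1 n2 n3) : tensor n2 n1 n3 :=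
  fold (unfold (ctrC (tmap qd A))
        - map_mx (fun x => x * qj) (permkron n3 n2 *m unfold (ctrC (tmap qc A)))).

Definition unitaryT n n3 (U : tensor n n n3) : Prop :=
  qtprod (ctrT U) U = tid n n3 /\ qtprod U (ctrT U) = tid n n3.

Definition fdiagT n1 n2 n3 (S : tensor n1 n2 n3) : Prop :=
  forall (s : 'I_n3) (i : 'I_n1) (j : 'I_n2), (i : nat) != j -> S s i j = 0.

Definition is_QTSVD n1 n2 n3 (A : tensor n1 n2 n3)
  (U : tensor n1 n1 n3) (S : tensor n1 n2 n3) (V : tensor n2 n2 n3) : Prop :=
  [/\ unitaryT U, unitaryT V, fdiagT S & A = qtprod (qtprod U S) (ctrT V)].

Definition tubeF n1 n2 n3 (S : tensor n1 n2 n3) (i : nat) : R :=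
  Num.sqrt (\sum_(s < n3) qnorm2 (mget (S s) i i)).

Definition svd_count n1 n2 n3 (S : tensor n1 n2 n3) : nat :=
  #|[pred i : 'I_(minn n1 n2) | 0 < tubeF S i]|.

Definition rankQT n1 n2 n3 (A : tensor n1 n2 n3) : nat :=
  epsilon (inhabits 0%N)
    (fun r => exists U S V, is_QTSVD A U S V /\ svd_count S = r).

Definition is_IndQT n n3 (A : tensor n n n3) (k : nat) : Prop :=
  rankQT (qtpow A k.+1) = rankQT (qtpow A k) /\
  (forall j, (j < k)%N -> rankQT (qtpow A j.+1) <> rankQT (qtpow A j)).

Definition is_QTDrazin n n3 (A X : tensor n n n3) (k : nat) : Prop :=
  [/\ qtprod (qtprod (qtpow A k) X) A = qtpow A k,
      qtprod (qtprod X A) X = X &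
      qtprod A X = qtprod X A].

End Quaternion.

From HB Require Import structures.
From mathcomp Require Import all_boot all_order all_algebra.
From mathcomp Require Import boolp reals ring zify.
Set Implicit Arguments. Unset Strict Implicit. Unset Printing Implicit Defensive.
Import Order.TTheory GRing.Theory Num.Theory.
Local Open Scope ring_scope.

(* [bcircz] is multiplicative and sends the identity tensor to the identity
   matrix: block (p, q) of [bcircz A] is A_d(p - q) + j A_c(p + q) (slices mod
   n3), and since j z = conj(z) j for complex z, multiplying two such block
   matrices reproduces the same pattern for A *_Q B after a cyclic reindexing
   of the sums.  Hence the three Drazin equations for A, A^D with exponent k
   hold for M = bcircz A, X = bcircz A^D.  For quaternion matrices these
   equations already force X = M^D, whatever k is: M^k = M^(k+1) X gives
   rank M^(k+1) = rank M^k, so m = Ind M exists; rank M^(m+1) = rank M^m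
   yields M^m = M^(m+1) Y, hence M^m = M^(m+k) Y^k, and then
   M^m X M = X M M^(m+k) Y^k = M^k M^m Y^k = M^m.  Rank facts are proved from
   the definition of rank as a maximal number of right independent columns,
   via Gaussian elimination over the skew field of quaternions. *)

Section QuaternionRank.
Variable R : realType.
Local Notation H := (quat R).

Lemma qmulE (x y : H) : x * y = qmul x y. Proof. by []. Qed.
Lemma qaddE (x y : H) : x + y = qadd x y. Proof. by []. Qed.

Definition qinv (x : H) : H :=
  let r := (qnorm2 x)^-1 in Quat (q0 x * r) (- q1 x * r) (- q2 x * r) (- q3 x * r).

Lemma qnorm2_neq0 (x : H) : x != 0 -> qnorm2 x != 0.
Proof.
case: x => a b c d; rewrite /qnorm2 /=; apply: contraNN.
rewrite !paddr_eq0 ?addr_ge0 ?sqr_ge0 // !sqrf_eq0.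
by case/andP => /andP[] /andP[] /eqP-> /eqP-> /eqP-> /eqP->.
Qed.

Lemma qmulV (x : H) : x != 0 -> x * qinv x = 1.
Proof.
move=> /qnorm2_neq0; case: x => a b c d; rewrite /qnorm2 /= => nz.
by rewrite qmulE /qmul /qinv /qnorm2 /=; congr Quat; field.
Qed.

Definition col_supp n (c : 'cV[H]_n) (S : {set 'I_n}) :=
  forall j, j \notin S -> c j ord0 = 0.

(* Column operation clearing row [i0] of [E] with the pivot [E i0 j]. *)
Definition pivot_mx m k (E : 'M[H]_(m, k)) i0 j : 'M[H]_k :=
  1%:M - \matrix_(x, l) (if x == j then qinv (E i0 j) * E i0 l else 0).

Lemma pivot_mx_row m k (E : 'M[H]_(m, k)) i0 j l :
  E i0 j != 0 -> (E *m pivot_mx E i0 j) i0 l = 0.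
Proof.
move=> Ej; rewrite mulmxBr mulmx1 !mxE (bigD1 j) //= big1 => [|x xj]; last first.
  by rewrite mxE (negbTE xj) mulr0.
by rewrite mxE eqxx addr0 mulrA qmulV // mul1r subrr.
Qed.

Lemma pivot_mxE m k (E : 'M[H]_(m, k)) i0 j (c : 'cV[H]_k) x :
  x != j -> (pivot_mx E i0 j *m c) x ord0 = c x ord0.
Proof.
move=> xj; rewrite mulmxBl mul1mx !mxE big1 ?subr0 // => y _.
by rewrite mxE (negbTE xj) mul0r.
Qed.

Lemma underdetermined_kernel m k (E : 'M[H]_(m, k)) (Rw : {set 'I_m}) (S : {set 'I_k}) :
  (#|Rw| < #|S|)%N ->
  exists c : 'cV[H]_k,
    [/\ c != 0, col_supp c S & forall i, i \in Rw -> (E *m c) i ord0 = 0].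
Proof.
move cR: #|Rw| => t; elim: t E Rw S cR => [|t IH] E Rw S cR ltS.
  have [j jS] : exists j, j \in S by apply/set0Pn; rewrite -card_gt0.
  exists (delta_mx j ord0); split.
  - by apply/eqP => /matrixP/(_ j ord0)/eqP; rewrite !mxE !eqxx oner_eq0.
  - by move=> j' j'S; rewrite mxE; case: eqP => // ej; rewrite ej jS in j'S.
  - by move=> i; rewrite (card0_eq cR).
have [i0 i0R] : exists i0, i0 \in Rw by apply/set0Pn; rewrite -card_gt0 cR.
have cR' : #|Rw :\ i0| = t by move: cR; rewrite (cardsD1 i0) i0R => -[].
have E_Rw c : (E *m c) i0 ord0 = 0 -> (forall i, i \in Rw :\ i0 -> (E *m c) i ord0 = 0) ->
    forall i, i \in Rw -> (E *m c) i ord0 = 0.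
  by move=> c0 cR'0 i iR; case: (eqVneq i i0) => [->//|ii0]; rewrite cR'0 // !inE ii0.
case: (pickP (fun j => (j \in S) && (E i0 j != 0))) => [j /andP[jS Ej] | noPivot].
  have ltS' : (t < #|S :\ j|)%N by rewrite (cardsD1 j S) jS in ltS.
  have [c [c_nz cS Ec]] := IH (E *m pivot_mx E i0 j) _ _ cR' ltS'.
  exists (pivot_mx E i0 j *m c); split.
  - apply: contra c_nz => /eqP Pc0; apply/eqP/matrixP => x y; rewrite (ord1 y) mxE.
    case: (eqVneq x j) => [->|xj]; first by apply: cS; rewrite !inE eqxx.
    by rewrite -(pivot_mxE E i0 c xj) Pc0 mxE.
  - move=> x xS; have xj : x != j by apply: contraNneq xS => ->.
    by rewrite pivot_mxE // cS // !inE negb_and xS orbT.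
  - apply: E_Rw => [|i iR]; last by rewrite mulmxA Ec.
    by rewrite mulmxA mxE big1 // => l _; rewrite pivot_mx_row // mul0r.
have [c [c_nz cS Ec]] := IH E _ S cR' (ltnW ltS).
exists c; split => //; apply: E_Rw => //.
rewrite mxE big1 // => l _; case: (boolP (l \in S)) => lS; last by rewrite cS // mulr0.
by move: (noPivot l); rewrite lS /= => /negbFE/eqP ->; rewrite mul0r.
Qed.

Lemma col_indep_set0 m p (A : 'M[H]_(m, p)) : col_indep A set0.
Proof. by move=> c cS _; apply/matrixP => i j; rewrite (ord1 j) cS ?inE // mxE. Qed.

Lemma leq_card_qrank m p (A : 'M[H]_(m, p)) S : col_indep A S -> (#|S| <= qrank A)%N.
Proof.
by move=> indS; apply: (@leq_bigmax_cond _ (fun S => `[< col_indep A S >])); exact: asboolT.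
Qed.

Lemma qrank_witness m p (A : 'M[H]_(m, p)) : exists2 T, col_indep A T & #|T| = qrank A.
Proof.
have ind0 : `[< col_indep A set0 >] by apply: asboolT; exact: col_indep_set0.
have [T /asboolP indT maxT] :=
  @arg_maxnP _ set0 (fun S => `[< col_indep A S >]) (fun S : {set 'I_p} => #|S|) ind0.
exists T => //; apply/eqP; rewrite eqn_leq leq_card_qrank //=.
by apply/bigmax_leqP => S /maxT.
Qed.

Lemma max_col_indep_span m p (A : 'M[H]_(m, p)) T :
  col_indep A T -> #|T| = qrank A ->
  forall l, exists2 d : 'cV[H]_p, col_supp d T & A *m d = col l A.
Proof.
move=> indT cT l; case: (boolP (l \in T)) => lT.
  exists (delta_mx l ord0); last by rewrite colE.
  by move=> j jT; rewrite mxE; case: eqP => // ej; rewrite ej lT in jT.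
apply: contrapT => nospan.
suff /leq_card_qrank : col_indep A (l |: T) by rewrite cardsU1 lT cT ltnn.
move=> c cS Ac; case: (eqVneq (c l ord0) 0) => cl0.
  apply: indT => // j jT; case: (eqVneq j l) => [->//|jl].
  by apply: cS; rewrite !inE negb_or jl jT.
exfalso; apply: nospan.
exists (\col_x (if x == l then 0 else - (c x ord0 * qinv (c l ord0)))).
  move=> x xT; rewrite mxE; case: eqP => // /eqP xl.
  by rewrite cS ?mul0r ?oppr0 // !inE negb_or xl xT.
apply/matrixP => i y; rewrite (ord1 y) !mxE.
have : (A *m c) i ord0 = 0 by rewrite Ac mxE.
rewrite mxE (bigD1 l) //= => /eqP; rewrite addrC addr_eq0 => /eqP e.
rewrite (bigD1 l) //= mxE eqxx mulr0 add0r.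
under eq_bigr => x xl do rewrite mxE (negbTE xl) mulrN mulrA.
by rewrite sumrN -mulr_suml e mulNr opprK -mulrA qmulV // mulr1.
Qed.

Lemma exists_mx_cols m p q (A : 'M[H]_(m, p)) (B : 'M[H]_(m, q)) (P : 'cV[H]_p -> Prop) :
  (forall l, exists2 d, P d & A *m d = col l B) ->
  exists2 D : 'M[H]_(p, q), (forall l, P (col l D)) & A *m D = B.
Proof.
move=> cols; have /choice [f fP] : forall l, exists d, P d /\ A *m d = col l B.
  by move=> l; have [d Pd Ad] := cols l; exists d.
have colD l : col l (\matrix_(i, l) f l i ord0) = f l.
  by apply/matrixP => i y; rewrite (ord1 y) !mxE.
exists (\matrix_(i, l) f l i ord0) => [l|]; first by rewrite colD; case: (fP l).
apply/matrixP => i l; have /(congr1 (fun M : 'cV[H]_m => M i ord0)) := (fP l).2.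
by rewrite !mxE => <-; apply: eq_bigr => x _; rewrite mxE.
Qed.

Lemma col_indep_mulmx_card m p q (A : 'M[H]_(m, p)) (C : 'M[H]_(p, q)) S :
  col_indep (A *m C) S -> (#|S| <= qrank A)%N.
Proof.
move=> indS; have [T indT cT] := qrank_witness A.
have [D DT AD] := exists_mx_cols (max_col_indep_span indT cT).
rewrite -cT leqNgt; apply/negP => ltTS.
have [c [c_nz cS Ec]] := underdetermined_kernel (D *m C) ltTS.
have DCc : D *m C *m c = 0.
  apply/matrixP => i y; rewrite (ord1 y) [RHS]mxE.
  case: (boolP (i \in T)) => iT; first exact: Ec.
  rewrite -mulmxA mxE big1 // => x _.
  by have := DT x i iT; rewrite mxE => ->; rewrite mul0r.
by move: c_nz; rewrite (indS c cS) ?eqxx // -AD -!mulmxA (mulmxA D) DCc mulmx0.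
Qed.

Lemma qrank_mulmx_le m p q (A : 'M[H]_(m, p)) (C : 'M[H]_(p, q)) :
  (qrank (A *m C) <= qrank A)%N.
Proof. by have [T indT <-] := qrank_witness (A *m C); exact: col_indep_mulmx_card indT. Qed.

Lemma col_indep_row_mx m p q (B : 'M[H]_(m, p)) (C : 'M[H]_(m, q)) T :
  col_indep B T -> col_indep (row_mx B C) [set lshift q x | x in T].
Proof.
move=> indT c cT BCc.
have c2 : dsubmx c = 0.
  apply/matrixP => i y; rewrite (ord1 y) !mxE; apply: cT.
  by apply/imsetP => -[x _ /eqP]; rewrite eq_rlshift.
have c1 : usubmx c = 0.
  apply: indT => [x xT|]; last by rewrite -[c]vsubmxK mul_row_col c2 mulmx0 addr0 in BCc.
  rewrite mxE; apply: cT; apply/imsetP => -[y yT /lshift_inj exy].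
  by rewrite exy yT in xT.
by rewrite -[c]vsubmxK c1 c2 col_mx0.
Qed.

Lemma qrank_row_mx_span m p q (B : 'M[H]_(m, p)) (C : 'M[H]_(m, q)) :
  (qrank (row_mx B C) <= qrank B)%N -> exists D, C = B *m D.
Proof.
move=> le_BC_B; have [T indT cT] := qrank_witness B.
have indT' := col_indep_row_mx (C := C) indT.
have cT' : #|[set lshift q x | x in T]| = qrank (row_mx B C).
  apply/eqP; rewrite eqn_leq leq_card_qrank // card_imset ?cT //; exact: lshift_inj.
have Ccols l : exists2 d : 'cV[H]_p, True & B *m d = col l C.
  have [d dT BCd] := max_col_indep_span indT' cT' (rshift p l).
  exists (usubmx d) => //.
  have d2 : dsubmx d = 0.
    apply/matrixP => i y; rewrite (ord1 y) !mxE; apply: dT.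
    by apply/imsetP => -[x _ /eqP]; rewrite eq_rlshift.
  by rewrite -[d]vsubmxK mul_row_col d2 mulmx0 addr0 colKr in BCd.
by have [D _ <-] := exists_mx_cols Ccols; exists D.
Qed.

Lemma qrank_mulmx_eq_span m N (A : 'M[H]_(m, N)) (M : 'M[H]_N) :
  qrank (A *m M) = qrank A -> exists Y, A = A *m M *m Y.
Proof.
move=> eqr; apply: qrank_row_mx_span.
have -> : row_mx (A *m M) A = A *m row_mx M 1%:M by rewrite mul_mx_row mulmx1.
by rewrite eqr qrank_mulmx_le.
Qed.

End QuaternionRank.

Section DrazinCriterion.
Variables (R : realType) (N : nat).
Local Notation H := (quat R).
Implicit Types M X : 'M[H]_N.

Lemma mxpowE M k : mxpow M k = M ^+ k.
Proof. by elim: k => //= k ->; rewrite exprS mulmxE. Qed.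

Lemma qrank_expr_stable M m :
  qrank (M ^+ m.+1) = qrank (M ^+ m) ->
  exists Y : 'M[H]_N, forall j, M ^+ m = M ^+ (m + j) * Y ^+ j.
Proof.
rewrite exprSr -mulmxE => /qrank_mulmx_eq_span [Y]; rewrite !mulmxE => eY.
exists Y; elim=> [|j IH]; first by rewrite addn0 mulr1.
have step : M ^+ (m + j) = M ^+ (m + j.+1) * Y.
  rewrite addnC exprD {1}eY !mulrA -exprD -exprSr; congr (_ ^+ _ * _); lia.
by rewrite {1}IH step exprS mulrA.
Qed.

Lemma stable_expr_mulXM M X k m :
  M ^+ k * X * M = M ^+ k -> M * X = X * M ->
  qrank (M ^+ m.+1) = qrank (M ^+ m) -> M ^+ m * X * M = M ^+ m.
Proof.
move=> eXk cMX /qrank_expr_stable [Y eY].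
have cXM j : GRing.comm X (M ^+ j) by apply/commrX/esym.
have cMM j : GRing.comm M (M ^+ j) by apply: commrX.
have XMk : X * M * M ^+ k = M ^+ k by rewrite -mulrA (cMM k) mulrA (cXM k).
have -> : M ^+ m * X * M = X * M * M ^+ m by rewrite -(cXM m) -!mulrA (cMM m).
by rewrite {1}(eY k) addnC exprD !mulrA XMk -exprD addnC -eY.
Qed.

Lemma mxInd_exists M k : qrank (M ^+ k.+1) = qrank (M ^+ k) -> exists m, is_mxInd M m.
Proof.
move=> eqk; have exP : exists j, qrank (M ^+ j.+1) == qrank (M ^+ j) by exists k; apply/eqP.
case: (ex_minnP exP) => m /eqP Pm minm; exists m; split; first by rewrite !mxpowE.
by move=> j jm; rewrite !mxpowE => /eqP/minm; rewrite leqNgt jm.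
Qed.

(* [k] need not be the index: the index is found below [k]. *)
Lemma is_mxDrazin_of_eqs M X k :
  M ^+ k *m X *m M = M ^+ k -> X *m M *m X = X -> M *m X = X *m M -> is_mxDrazin M X.
Proof.
rewrite !mulmxE => eXk eXMX cMX.
have eMk : M ^+ k = M ^+ k *m M *m X by rewrite !mulmxE -mulrA cMX mulrA eXk.
have rank_k : qrank (M ^+ k.+1) = qrank (M ^+ k).
  apply/eqP; rewrite eqn_leq exprSr -mulmxE qrank_mulmx_le /=.
  by rewrite {1}eMk qrank_mulmx_le.
have [m ind_m] := mxInd_exists rank_k.
exists m; split => //; rewrite mxpowE !mulmxE; split => //.
by apply: stable_expr_mulXM eXk cMX _; case: ind_m; rewrite !mxpowE.
Qed.

End DrazinCriterion.

Lemma sum_periodic_shift1 (V : zmodType) N (F : int -> V) :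
  (forall u, F (u + N%:Z) = F u) -> \sum_(s < N) F (s%:Z + 1) = \sum_(s < N) F s%:Z.
Proof.
case: N => [|N] perF; first by rewrite !big_ord0.
rewrite big_ord_recr big_ord_recl /= addrC; congr (_ + _).
  by rewrite -(perF 0) add0r; congr F; lia.
by apply: eq_bigr => s _; congr F; rewrite /bump /=; lia.
Qed.

Lemma sum_periodic_shift (V : zmodType) N (F : int -> V) z :
  (forall u, F (u + N%:Z) = F u) -> \sum_(s < N) F (s%:Z + z) = \sum_(s < N) F s%:Z.
Proof.
move=> perF; have perFw w u : F (u + N%:Z + w) = F (u + w).
  by rewrite -addrA (addrC N%:Z) addrA perF.
elim/int_rec: z => [|i IH|i IH]; first by under eq_bigr do rewrite addr0.
  rewrite -IH -(sum_periodic_shift1 (F := fun u => F (u + i%:Z))) ?perFw //.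
  by apply: eq_bigr => s _; congr F; lia.
rewrite -IH -(sum_periodic_shift1 (F := fun u => F (u - i.+1%:Z))) ?perFw //.
by apply: eq_bigr => s _; congr F; lia.
Qed.

Section ZComponents.
Variable R : realType.
Local Notation H := (quat R).
Local Notation J := (qj R).

(* The shape of the entries of [bcircz]: the [d]-part of one slice plus [j]
   times the [c]-part of another. *)
Definition zmix (x y : H) : H := qd x + J * qc y.

Lemma qdD (x y : H) : qd (x + y) = qd x + qd y.
Proof.
by case: x => ? ? ? ?; case: y => ? ? ? ?; rewrite !qaddE /qadd /qd /=; congr Quat; ring.
Qed.

Lemma qcD (x y : H) : qc (x + y) = qc x + qc y.
Proof.
by case: x => ? ? ? ?; case: y => ? ? ? ?; rewrite !qaddE /qadd /qc /=; congr Quat; ring.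
Qed.

Lemma qd0 : qd (0 : H) = 0. Proof. by []. Qed.
Lemma qc0 : qc (0 : H) = 0. Proof. by rewrite /qc /= oppr0. Qed.

(* [j z = conj(z) j] for complex [z] *)
Lemma qd_zmix_mul (x y z : H) : qd (zmix x y * z) = qd x * qd z + J * qc y * (J * qc z).
Proof.
case: x => ? ? ? ?; case: y => ? ? ? ?; case: z => ? ? ? ?.
by rewrite /zmix !qmulE !qaddE /qmul /qadd /qd /qc /qj /=; congr Quat; ring.
Qed.

Lemma qc_zmix_mul (x y z : H) : J * qc (zmix x y * z) = qd x * (J * qc z) + J * qc y * qd z.
Proof.
case: x => ? ? ? ?; case: y => ? ? ? ?; case: z => ? ? ? ?.
by rewrite /zmix !qmulE !qaddE /qmul /qadd /qd /qc /qj /=; congr Quat; ring.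
Qed.

End ZComponents.

Section ZConvolution.
Variables (R : realType) (N M : nat) (a b : int -> nat -> quat R).
Local Notation J := (qj R).

(* Slice [t] of a QT-product, with [a t] / [b t] a row / column of slice [t]. *)
Definition zconv (t : int) : quat R :=
  \sum_(s < N) \sum_(l < M) zmix (a (t - s%:Z) l) (a (t + s%:Z) l) * b s%:Z l.

Lemma qd_zconv t : qd (zconv t) = \sum_(s < N) \sum_(l < M)
  (qd (a (t - s%:Z) l) * qd (b s%:Z l) + J * qc (a (t + s%:Z) l) * (J * qc (b s%:Z l))).
Proof.
rewrite (big_morph _ (@qdD R) (qd0 R)); apply: eq_bigr => s _.
by rewrite (big_morph _ (@qdD R) (qd0 R)); apply: eq_bigr => l _; exact: qd_zmix_mul.
Qed.

Lemma qc_zconv t : J * qc (zconv t) = \sum_(s < N) \sum_(l < M)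
  (qd (a (t - s%:Z) l) * (J * qc (b s%:Z l)) + J * qc (a (t + s%:Z) l) * qd (b s%:Z l)).
Proof.
rewrite (big_morph _ (@qcD R) (qc0 R)) mulr_sumr; apply: eq_bigr => s _.
rewrite (big_morph _ (@qcD R) (qc0 R)) mulr_sumr.
by apply: eq_bigr => l _; exact: qc_zmix_mul.
Qed.

Hypotheses (a_per : forall t l, a (t + N%:Z) l = a t l)
           (b_per : forall t l, b (t + N%:Z) l = b t l).

Lemma zmix_zconv p q : zmix (zconv (p - q)) (zconv (p + q)) =
  \sum_(s < N) \sum_(l < M) zmix (a (p - s%:Z) l) (a (p + s%:Z) l) *
                            zmix (b (s%:Z - q) l) (b (s%:Z + q) l).
Proof.
(* Terms meeting the [d]-part of [b] are reindexed by [-q], those meeting its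
   [c]-part by [+q]. *)
pose G13 u := \sum_(l < M)
  (qd (a (p - q - u) l) * qd (b u l) + J * qc (a (p + q + u) l) * qd (b u l)).
pose G24 u := \sum_(l < M)
  (qd (a (p + q - u) l) * (J * qc (b u l)) + J * qc (a (p - q + u) l) * (J * qc (b u l))).
have a_perN t l : a (t - N%:Z) l = a t l by rewrite -(a_per (t - N%:Z)) subrK.
have G13_per u : G13 (u + N%:Z) = G13 u.
  apply: eq_bigr => l _; rewrite b_per -(a_perN (p - q - u)) -(a_per (p + q + u)).
  by congr (qd (a _ l) * _ + J * qc (a _ l) * _); lia.
have G24_per u : G24 (u + N%:Z) = G24 u.
  apply: eq_bigr => l _; rewrite b_per -(a_perN (p + q - u)) -(a_per (p - q + u)).
  by congr (qd (a _ l) * _ + J * qc (a _ l) * _); lia.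
have add4 (x1 x2 x3 x4 : quat R) : (x1 + x4) + (x2 + x3) = (x1 + x3) + (x2 + x4).
  by rewrite addrACA [x4 + _]addrC addrACA.
transitivity (\sum_(s < N) (G13 (s%:Z - q) + G24 (s%:Z + q))); last first.
  apply: eq_bigr => s _; rewrite -big_split; apply: eq_bigr => l _ /=.
  have -> : p - q - (s%:Z - q) = p - s%:Z by lia.
  have -> : p + q + (s%:Z - q) = p + s%:Z by lia.
  have -> : p + q - (s%:Z + q) = p - s%:Z by lia.
  have -> : p - q + (s%:Z + q) = p + s%:Z by lia.
  by rewrite /zmix mulrDl !mulrDr addrACA.
rewrite big_split /= (sum_periodic_shift (- q) G13_per) (sum_periodic_shift q G24_per).
rewrite /zmix qd_zconv qc_zconv -!big_split; apply: eq_bigr => s _.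
by rewrite -!big_split; apply: eq_bigr => l _; exact: add4.
Qed.

End ZConvolution.

Section BlockCirculant.
Variables (R : realType) (n3 : nat).
Local Notation H := (quat R).

Lemma mget_ord a b (M : 'M[H]_(a, b)) (i : 'I_a) (j : 'I_b) : mget M i j = M i j.
Proof. by rewrite /mget !valK. Qed.

Lemma mgetE a b (M : 'M[H]_(a, b)) i j (lt_ia : (i < a)%N) (lt_jb : (j < b)%N) :
  mget M i j = M (Ordinal lt_ia) (Ordinal lt_jb).
Proof. by rewrite -mget_ord. Qed.

Lemma mgetD a b (M1 M2 : 'M[H]_(a, b)) i j : mget (M1 + M2) i j = mget M1 i j + mget M2 i j.
Proof.
rewrite /mget; case: (insub i : option 'I_a) => [i'|]; last by rewrite addr0.
by case: (insub j : option 'I_b) => [j'|]; rewrite ?mxE ?addr0.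
Qed.

Lemma mget_map a b (f : H -> H) (M : 'M[H]_(a, b)) i j :
  f 0 = 0 -> mget (map_mx f M) i j = f (mget M i j).
Proof.
move=> f0; rewrite /mget; case: (insub i : option 'I_a) => [i'|] //.
by case: (insub j : option 'I_b) => [j'|] //; rewrite mxE.
Qed.

Definition tentry n1 n2 (A : tensor R n1 n2 n3) (t : int) (i j : nat) : H :=
  mget (sliceN A `|(t %% n3)%Z|%N) i j.

Section Entries.
Variables (n1 n2 : nat).
Implicit Types A : tensor R n1 n2 n3.

Lemma tentry_map (f : H -> H) A t i j :
  f 0 = 0 -> tentry (tmap f A) t i j = f (tentry A t i j).
Proof.
move=> f0; rewrite /tentry -mget_map // /sliceN.
case: (insub _ : option 'I_n3) => [s|]; first by rewrite ffunE.
by congr mget; apply/matrixP => i' j'; rewrite !mxE f0.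
Qed.

Lemma tentryDn A t i j : tentry A (t + n3%:Z) i j = tentry A t i j.
Proof. by rewrite /tentry modzDr. Qed.

Lemma tentry_modz A t u i j : tentry A ((t %% n3)%Z + u) i j = tentry A (t + u) i j.
Proof. by rewrite /tentry modzDml. Qed.

Lemma tentry_nat A (s : nat) i j :
  (s < n3)%N -> tentry A s i j = mget (sliceN A s) i j.
Proof. by move=> lt_s; rewrite /tentry modz_nat modn_small. Qed.

End Entries.

Section BlockIndex.
Variable b : nat.

Lemma blk_lt s l : (s < n3)%N -> (l < b)%N -> (s * b + l < n3 * b)%N.
Proof. by move=> *; nia. Qed.

Lemma blk_div s l : (l < b)%N -> ((s * b + l) %/ b = s)%N.
Proof. by move=> lt_l; rewrite divnMDl ?divn_small ?addn0 // (leq_ltn_trans _ lt_l). Qed.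

Lemma blk_mod s l : (l < b)%N -> ((s * b + l) %% b = l)%N.
Proof. by move=> lt_l; rewrite modnMDl modn_small. Qed.

Lemma blk_eq p q i j : (i < b)%N -> (j < b)%N ->
  (p * b + i == q * b + j)%N = (p == q) && (i == j).
Proof.
move=> lt_i lt_j; apply/idP/idP => [/eqP e | /andP[/eqP-> /eqP->] //].
have := congr1 (modn^~ b) e; have := congr1 (divn^~ b) e.
by rewrite /= !blk_div // !blk_mod // => -> ->; rewrite !eqxx.
Qed.

End BlockIndex.

Lemma modn_opp s : (s < n3)%N -> ((n3 - s) %% n3 = if s == 0%N then 0 else n3 - s)%N.
Proof. by case: s => [|s] lt_s; [rewrite subn0 modnn | rewrite modn_small //; lia]. Qed.

Lemma modn_opp_sym p s : (p < n3)%N -> (s < n3)%N ->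
  (p == (n3 - s) %% n3)%N = (s == (n3 - p) %% n3)%N.
Proof.
by move=> lt_p lt_s; rewrite !modn_opp //; case: p lt_p => [|p]; case: s lt_s => [|s] /=; lia.
Qed.

Lemma absmodz_lt t : (0 < n3)%N -> (`|(t %% n3)%Z| < n3)%N.
Proof.
move=> n3_gt0; have := @modz_ge0 t n3; have := @ltz_pmod t n3; lia.
Qed.

Lemma absmodzE t : (0 < n3)%N -> ((`|(t %% n3)%Z|%N : int) = (t %% n3)%Z).
Proof. by move=> n3_gt0; have := @modz_ge0 t n3; lia. Qed.

Lemma bcirc_blk n1 n2 (C : tensor R n1 n2 n3) p s i l :
  (p < n3)%N -> (s < n3)%N -> (i < n1)%N -> (l < n2)%N ->
  mget (bcirc C) (p * n1 + i) (s * n2 + l) = tentry C (p%:Z - s%:Z) i l.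
Proof.
move=> lt_p lt_s lt_i lt_l.
rewrite (mgetE _ (blk_lt lt_p lt_i) (blk_lt lt_s lt_l)) mxE /= !blk_div // !blk_mod //.
rewrite -tentryDn /tentry (_ : _ + _ = (p + n3 - s)%N :> int) ?modz_nat //; lia.
Qed.

Lemma mul_permkron m n2 (X : 'M[H]_(m, n3 * n2)) r p j :
  (r < m)%N -> (p < n3)%N -> (j < n2)%N ->
  mget (X *m permkron R n3 n2) r (p * n2 + j) = mget X r (((n3 - p) %% n3) * n2 + j).
Proof.
move=> lt_r lt_p lt_j; have lt_p' : ((n3 - p) %% n3 < n3)%N by rewrite ltn_mod; lia.
rewrite (mgetE _ lt_r (blk_lt lt_p lt_j)) (mgetE _ lt_r (blk_lt lt_p' lt_j)) mxE.
rewrite (bigD1 (Ordinal (blk_lt lt_p' lt_j))) //= big1 ?addr0 => [|x /eqP neq_x].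
  by rewrite mxE /= !blk_div // !blk_mod // eqxx andbT modn_opp_sym // eqxx mulr1.
rewrite mxE /= blk_div // blk_mod //.
case: (boolP (_ && _)) => [/andP[e /eqP e_j]|]; last by rewrite mulr0.
have lt_x : (x %/ n2 < n3)%N by rewrite ltn_divLR; [exact: ltn_ord | lia].
case: neq_x; apply: val_inj => /=; move: e; rewrite modn_opp_sym // => /eqP <-.
by rewrite -e_j -divn_eq.
Qed.

Lemma bcircz_blk n1 n2 (A : tensor R n1 n2 n3) p s i l :
  (p < n3)%N -> (s < n3)%N -> (i < n1)%N -> (l < n2)%N ->
  mget (bcircz A) (p * n1 + i) (s * n2 + l) =
  zmix (tentry A (p%:Z - s%:Z) i l) (tentry A (p%:Z + s%:Z) i l).
Proof.
move=> lt_p lt_s lt_i lt_l; have lt_s' : ((n3 - s) %% n3 < n3)%N by rewrite ltn_mod; lia.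
rewrite /bcircz mgetD mget_map ?mulr0 // mul_permkron ?blk_lt //.
rewrite !bcirc_blk // !tentry_map ?qd0 ?qc0 // /zmix modn_opp //.
case: eqP => [->|_]; last rewrite -(tentryDn _ (p%:Z - (n3 - s)%N%:Z)).
all: by congr (_ + qj R * qc (tentry _ _ _ _)); lia.
Qed.

Lemma unfold_blk n1 n2 (B : tensor R n1 n2 n3) s l j :
  (s < n3)%N -> (l < n1)%N -> (j < n2)%N -> mget (unfold B) (s * n1 + l) j = tentry B s l j.
Proof.
move=> lt_s lt_l lt_j; rewrite (mgetE _ (blk_lt lt_s lt_l) lt_j) mxE /=.
by rewrite blk_div // blk_mod // tentry_nat.
Qed.

Lemma tentry_fold n1 n2 (M : 'M[H]_(n3 * n1, n2)) t i j :
  (0 < n3)%N -> (i < n1)%N -> (j < n2)%N ->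
  tentry (fold M) t i j = mget M (`|(t %% n3)%Z| * n1 + i) j.
Proof.
move=> n3_gt0 lt_i lt_j; have lt_t := absmodz_lt t n3_gt0.
by rewrite /tentry /sliceN insubT /fold ffunE (mgetE _ lt_i lt_j) mxE.
Qed.

Lemma sum_ord_mul (V : zmodType) (F : nat -> V) a b :
  \sum_(x < a * b) F x = \sum_(s < a) \sum_(l < b) F (s * b + l)%N.
Proof.
elim: a => [|a IH]; first by rewrite !big_ord0.
by rewrite big_ord_recr /= -IH mulSnr big_split_ord.
Qed.

Lemma mget_mulmx m b p (X : 'M[H]_(m, n3 * b)) (Y : 'M[H]_(n3 * b, p)) r c :
  (r < m)%N -> (c < p)%N -> mget (X *m Y) r c =
  \sum_(s < n3) \sum_(l < b) mget X r (s * b + l)%N * mget Y (s * b + l)%N c.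
Proof.
move=> lt_r lt_c; rewrite (mgetE _ lt_r lt_c) mxE.
rewrite -(sum_ord_mul (fun x => mget X r x * mget Y x c)).
by apply: eq_bigr => x _; rewrite -[X _ _]mget_ord -[Y _ _]mget_ord.
Qed.

Lemma tentry_qtprod n1 n2 n4 (A : tensor R n1 n2 n3) (B : tensor R n2 n4 n3) t i j :
  (0 < n3)%N -> (i < n1)%N -> (j < n4)%N -> tentry (qtprod A B) t i j =
  zconv n3 n2 (fun t l => tentry A t i l) (fun t l => tentry B t l j) t.
Proof.
move=> n3_gt0 lt_i lt_j; have lt_t := absmodz_lt t n3_gt0.
rewrite /qtprod tentry_fold // mget_mulmx ?blk_lt //.
apply: eq_bigr => s _; apply: eq_bigr => l _.
by rewrite bcircz_blk // unfold_blk // absmodzE // !tentry_modz.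
Qed.

Lemma bcircz_mul n1 n2 n4 (A : tensor R n1 n2 n3) (B : tensor R n2 n4 n3) :
  bcircz (qtprod A B) = bcircz A *m bcircz B.
Proof.
apply/matrixP => r c; have lt_r := ltn_ord r; have lt_c := ltn_ord c.
have /andP[n3_gt0 n1_gt0] : (0 < n3)%N && (0 < n1)%N by rewrite -muln_gt0 (leq_ltn_trans _ lt_r).
have n4_gt0 : (0 < n4)%N by move: (leq_ltn_trans (leq0n _) lt_c); rewrite muln_gt0 => /andP[].
have lt_p : (r %/ n1 < n3)%N by rewrite ltn_divLR.
have lt_q : (c %/ n4 < n3)%N by rewrite ltn_divLR.
have lt_i : (r %% n1 < n1)%N by rewrite ltn_mod.
have lt_j : (c %% n4 < n4)%N by rewrite ltn_mod.
rewrite -[LHS]mget_ord -[RHS]mget_ord (divn_eq r n1) (divn_eq c n4).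
rewrite bcircz_blk // !tentry_qtprod // zmix_zconv => [|t l|t l]; try exact: tentryDn.
rewrite mget_mulmx ?blk_lt //; apply: eq_bigr => s _; apply: eq_bigr => l _.
by rewrite !bcircz_blk.
Qed.

Lemma absmodz_sub_eq0 p q : (p < n3)%N -> (q < n3)%N ->
  (`|((p%:Z - q%:Z) %% n3)%Z| == 0)%N = (p == q).
Proof.
move=> lt_p lt_q; rewrite -modzDr (_ : _ + _ = (p + n3 - q)%N :> int); last by lia.
rewrite modz_nat /=; case: (leqP q p) => le_qp; last by rewrite modn_small; lia.
by rewrite (_ : p + n3 - q = p - q + n3)%N ?modnDr ?modn_small; lia.
Qed.

Lemma tentry_tid n t i j : (0 < n3)%N -> (i < n)%N -> (j < n)%N ->
  tentry (tid R n n3) t i j = ((`|(t %% n3)%Z| == 0)%N && (i == j))%:R.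
Proof.
move=> n3_gt0 lt_i lt_j; have lt_t := absmodz_lt t n3_gt0.
rewrite /tentry /sliceN insubT /tid ffunE /= (mgetE _ lt_i lt_j).
by case: eqP => _; rewrite mxE.
Qed.

Lemma bcircz_tid n : bcircz (tid R n n3) = 1%:M.
Proof.
apply/matrixP => r c; have lt_r := ltn_ord r; have lt_c := ltn_ord c.
have /andP[n3_gt0 n_gt0] : (0 < n3)%N && (0 < n)%N by rewrite -muln_gt0 (leq_ltn_trans _ lt_r).
have lt_p : (r %/ n < n3)%N by rewrite ltn_divLR.
have lt_q : (c %/ n < n3)%N by rewrite ltn_divLR.
have lt_i : (r %% n < n)%N by rewrite ltn_mod.
have lt_j : (c %% n < n)%N by rewrite ltn_mod.
rewrite [RHS]mxE -val_eqE /= -[LHS]mget_ord (divn_eq r n) (divn_eq c n).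
rewrite bcircz_blk // !tentry_tid // absmodz_sub_eq0 // blk_eq //.
have qd_bool (b : bool) : qd (b%:R : H) = b%:R by case: b.
have qc_bool (b : bool) : qc (b%:R : H) = 0 by case: b; rewrite /qc /= oppr0.
by rewrite /zmix qc_bool mulr0 addr0 qd_bool.
Qed.

Lemma bcircz_qtpow n (A : tensor R n n n3) k : bcircz (qtpow A k) = bcircz A ^+ k.
Proof. by elim: k => [|k IH] /=; rewrite ?bcircz_tid // bcircz_mul IH exprS mulmxE. Qed.

End BlockCirculant.

Theorem lemma3p5 (R : realType) (n n3 k : nat) (A AD : tensor R n n n3) :
  is_IndQT A k -> is_QTDrazin A AD k ->
  is_mxDrazin (bcircz A) (bcircz AD).
Proof.
move=> _ [drazin_k drazin_X drazin_comm].
apply: (is_mxDrazin_of_eqs (k := k)).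
- by rewrite -bcircz_qtpow -!bcircz_mul drazin_k.
- by rewrite -!bcircz_mul drazin_X.
- by rewrite -!bcircz_mul drazin_comm.
Qed.
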